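(* Let $\Delta$ be a shellable simplicial complex on $[n]$ with $\dim\Delta\le n-3$, with shelling $F_1,\dots,F_q$, and let $F=F_q$ be the last facet. Let $\Delta_F$ be the simplicial complex on $F\cup\{v\}$ ($v$ a new vertex) whose facets are: (A) the sets $F_i\cap F$ maximal among $\{F_i\cap F: F\not\subseteq F_i,\ F_i\cup F\neq[n]\}$, and (B) the sets $(F_i\cap F)\cup\{v\}$ for facets $F_i$ with $F_i\cup F=[n]$. Then $\Delta_F$ is shellable. Moreover, there is a shelling of $\Delta_F$ such that for every facet of type (B), $\widetilde F_i=(F_i\cap F)\cup\{v\}$, one has $\widetilde G_i=G_i\cap F$, where $\widetilde G_i$ is computed in $\Delta_F$ with respect to this shelling and $G_i$ in $\Delta$ with respect to $F_1,\dots,F_q$.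
   Context: A shelling is an ordering $F_1,\dots,F_q$ of all facets such that for each $k\ge2$, $(\bigcup_{i<k}2^{F_i})\cap2^{F_k}$ is pure of dimension $\dim F_k-1$; a complex is shellable if it has one. A wall of a facet is a codimension-one face of it. For a shelling $F_1,\dots,F_q$, set $G_1=F_1$ and for $i\ge2$ let $G_i$ be the intersection of all walls of $F_i$ lying in the subcomplex generated by $F_1,\dots,F_{i-1}$. *)

From mathcomp Require Import all_boot all_order all_algebra.
Set Implicit Arguments. Unset Strict Implicit. Unset Printing Implicit Defensive.
Import GRing.Theory Num.Theory.

Section Complexes.
Variable T : finType.

Definition is_complex (D : {set {set T}}) : Prop :=
  forall A B : {set T}, B \subset A -> A \in D -> B \in D.

Definition facets (D : {set {set T}}) : {set {set T}} :=
  [set A in D | [forall B in D, (A \subset B) ==> (B == A)]].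

Definition fdim (A : {set T}) : int := (#|A|%:Z - 1)%R.

Definition pure_of_dim (D : {set {set T}}) (d : int) : Prop :=
  forall A, A \in facets D -> fdim A = d.

Definition gen (s : seq {set T}) : {set {set T}} :=
  [set A : {set T} | has (fun F : {set T} => A \subset F) s].

Definition gen_set (S : {set {set T}}) : {set {set T}} :=
  [set A : {set T} | [exists B in S, A \subset B]].

(* shelling condition on an ordered list of facets (0-indexed: facet k,
   k >= 1, against the subcomplex generated by facets 0..k-1) *)
Definition shelling_cond (s : seq {set T}) : Prop :=
  forall k, 0 < k < size s ->
    pure_of_dim (gen (take k s) :&: powerset (nth set0 s k))
                (fdim (nth set0 s k) - 1)%R.

Definition is_shelling (D : {set {set T}}) (s : seq {set T}) : Prop :=
  [/\ uniq s, (forall A, (A \in s) = (A \in facets D)) & shelling_cond s].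

Definition shellable (D : {set {set T}}) : Prop := exists s, is_shelling D s.

(* G_k: intersection of all walls of F_k lying in the subcomplex generated
   by the earlier facets (for k = 0 this is F_0 itself). *)
Definition Gset (s : seq {set T}) (k : nat) : {set T} :=
  let Fk := nth set0 s k in
  Fk :&: \bigcap_(x in Fk | (Fk :\ x) \in gen (take k s)) (Fk :\ x).

End Complexes.

(* The complex Delta_F on vertex type option 'I_n (the new vertex v is None,
   old vertex x is Some x), where F is the last facet of the shelling s. *)
Section DeltaF.
Variable n : nat.
Variable s : seq {set 'I_n}.

Definition lastF : {set 'I_n} := last set0 s.

Definition typeA_family : {set {set 'I_n}} :=
  [set Fi :&: lastF | Fi : {set 'I_n} in [set Fi : {set 'I_n} in s | (~~ (lastF \subset Fi)) && (Fi :|: lastF != setT)]].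

Definition typeA : {set {set option 'I_n}} :=
  [set (Some @: A) | A : {set 'I_n} in facets typeA_family].

Definition tildeF (Fi : {set 'I_n}) : {set option 'I_n} :=
  None |: (Some @: (Fi :&: lastF)).

Definition typeB : {set {set option 'I_n}} :=
  [set tildeF Fi | Fi : {set 'I_n} in [set Fi : {set 'I_n} in s | Fi :|: lastF == setT]].

Definition DeltaF : {set {set option 'I_n}} := gen_set (typeA :|: typeB).

End DeltaF.

(* Let F be the last facet and W the set of x in F whose wall F \ x lies in the
   complex of the earlier facets. The type-(A) facets of Delta_F are exactly the
   walls F \ x with x in W: every F_i :&: F with F_i <> F lies in such a wall by the
   shelling condition for F, and conversely each such wall is some F_i :&: F with
   F_i :|: F <> [n], because dim F_i <= n - 3. A shelling of Delta_F lists these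
   walls first, in any order (any two of them meet in a common wall), and then the
   type-(B) facets in the order of the given shelling. A type-(B) facet F_i contains
   [n] \ F, so for z in F the wall of (F_i :&: F) + v opposite z is an earlier face
   of Delta_F iff F_i \ z is an earlier face of Delta, while the wall F_i :&: F
   opposite v always lies in a type-(A) facet. Hence the shelling condition carries
   over, and the vertices of the new G_i are the z in F whose wall F_i \ z is new
   in Delta, that is, G_i :&: F. *)

From mathcomp Require Import all_boot all_order all_algebra zify.
Import GRing.Theory Num.Theory.
Set Implicit Arguments. Unset Strict Implicit.

Section Complexes.
Variable T : finType.
Implicit Types (A B C : {set T}) (S M : {set {set T}}) (s : seq {set T}).

Lemma genP B s : reflect (exists2 C, C \in s & B \subset C) (B \in gen s).
Proof. by rewrite inE; apply: hasP. Qed.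

Lemma gen_setP B S : reflect (exists2 C, C \in S & B \subset C) (B \in gen_set S).
Proof. by rewrite inE; apply: (iffP exists_inP) => -[C]; exists C. Qed.

Lemma facetsP S A :
  reflect (A \in S /\ forall B, B \in S -> A \subset B -> B = A) (A \in facets S).
Proof.
rewrite inE; apply: (iffP andP) => -[AS maxA]; split => //.
  by move=> B BS AB; apply/eqP; move/forall_inP/(_ B BS)/implyP: maxA; apply.
by apply/forall_inP => B BS; apply/implyP => AB; rewrite (maxA B).
Qed.

Lemma facet_supset S B : B \in S -> exists2 C, C \in facets S & B \subset C.
Proof.
move=> BS; have [C /maxsetP[CS maxC] BC] := @maxset_exists _ (mem S) B BS.
by exists C => //; apply/facetsP.
Qed.

Lemma facets_cofinal S M :
  M \subset S -> (forall A, A \in S -> exists2 B, B \in M & A \subset B) ->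
  {in M &, forall A B, A \subset B -> A = B} -> facets S = M.
Proof.
move=> /subsetP MS cofM antiM; apply/setP => A; apply/facetsP/idP.
  by case=> AS maxA; have [B BM AB] := cofM A AS; rewrite -(maxA B (MS B BM) AB).
move=> AM; split=> [|B BS AB]; first exact: MS.
have [C CM BC] := cofM B BS; have eAC := antiM A C AM CM (subset_trans AB BC).
by apply/eqP; rewrite eqEsubset AB eAC BC.
Qed.

Lemma setD1_subset_inj A x y : y \in A -> A :\ x \subset A :\ y -> x = y.
Proof.
move=> yA /subsetP/(_ y); rewrite !inE eqxx yA andbT /=.
by case: eqVneq => // _ /(_ isT).
Qed.

Lemma GsetE s k :
  Gset s k = [set x in nth set0 s k | nth set0 s k :\ x \notin gen (take k s)].
Proof.
apply/setP => z; rewrite /Gset in_setI in_set; case zFk: (z \in _) => //=.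
apply/bigcapP/idP => [capz | zwall x /andP[_ xwall]].
  by apply/negP => zwall; have := capz z; rewrite zFk zwall !inE eqxx => /(_ isT).
rewrite !inE zFk andbT; apply: contraNneq zwall => zx.
by rewrite -zx in xwall.
Qed.

Definition walls_cover (G : {set {set T}}) A : Prop :=
  forall B, B \in G -> B \subset A ->
    exists2 x, x \in A & (B \subset A :\ x) && (A :\ x \in G).

Lemma walls_cover_pure (G : {set {set T}}) A :
  walls_cover G A -> pure_of_dim (G :&: powerset A) (fdim A - 1)%R.
Proof.
move=> cover C /facetsP[]; rewrite inE powersetE => /andP[CG CA] maxC.
have [y yA /andP[Cy yG]] := cover C CG CA.
rewrite -(maxC (A :\ y)) ?inE ?powersetE ?yG ?subD1set // /fdim.
by rewrite [#|A|](cardsD1 y) yA; lia.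
Qed.

Lemma subset_cardS_setD1 A C : C \subset A -> #|C|.+1 = #|A| ->
  exists2 z, z \in A & C = A :\ z.
Proof.
move=> CA cardC; have /properP[_ [z zA zC]] : C \proper A.
  by rewrite properEcard CA -cardC ltnSn.
exists z => //; apply/eqP.
rewrite eqEcard subsetD1 CA zC /=; move: (cardsD1 z A); rewrite zA; lia.
Qed.

Lemma shelling_walls_cover s j : shelling_cond s -> 0 < j < size s ->
  walls_cover (gen (take j s)) (nth set0 s j).
Proof.
move=> shs jP B BG BFj.
have [C Cfacet BC] : exists2 C, C \in facets (gen (take j s) :&: powerset (nth set0 s j))
    & B \subset C by apply: facet_supset; rewrite inE BG powersetE.
have := shs j jP C Cfacet; rewrite /fdim => dimC.
case/facetsP: Cfacet; rewrite inE powersetE => /andP[CG CFj] _.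
have [|z zFj eC] := subset_cardS_setD1 CFj; first by lia.
by exists z => //; rewrite -eC BC CG.
Qed.

End Complexes.

Lemma nth_notin_take (T : eqType) (x0 : T) (s : seq T) i :
  uniq s -> i < size s -> nth x0 s i \notin take i s.
Proof.
move=> us hi; move: us; rewrite -{1}(cat_take_drop i s) (drop_nth x0 hi) cat_uniq.
by case/and3P => _ /hasPn H _; apply: H; rewrite inE eqxx.
Qed.

Lemma take_filter_index (T : eqType) (x0 : T) (p : pred T) (s : seq T) i :
  uniq s -> i < size s -> p (nth x0 s i) ->
  take (index (nth x0 s i) (filter p s)) (filter p s) = filter p (take i s).
Proof.
move=> us hi pi; have nin := nth_notin_take x0 us hi.
have es : s = take i s ++ nth x0 s i :: drop i.+1 s.
  by rewrite -(drop_nth x0 hi) cat_take_drop.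
move: nin pi; set x := nth x0 s i => nin pi.
rewrite [in filter p s]es filter_cat /= pi index_cat mem_filter (negbTE nin).
by rewrite andbF /= eqxx addn0 take_cat ltnn subnn take0 cats0.
Qed.

Lemma subset_imset_inj (aT rT : finType) (f : aT -> rT) (A B : {set aT}) :
  injective f -> (f @: A \subset f @: B) = (A \subset B).
Proof.
move=> injf; apply/idP/idP; last exact: imsetS.
by move=> /subsetP fAB; apply/subsetP => x /(imset_f f)/fAB; rewrite mem_imset.
Qed.

Lemma None_notin_imset_Some (T : finType) (X : {set T}) : None \notin Some @: X.
Proof. by apply/imsetP => -[]. Qed.

Lemma Some_in_imset_Some (T : finType) (X : {set T}) x : (Some x \in Some @: X) = (x \in X).
Proof. by apply: mem_imset => ? ? []. Qed.

Section LastFacet.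
Variables (n : nat) (s : seq {set 'I_n}).
Hypotheses (s_uniq : uniq s) (s_shelling : shelling_cond s)
  (s_antichain : {in s &, forall A B : {set 'I_n}, A \subset B -> A = B})
  (s_small : {in s, forall A : {set 'I_n}, #|A| + 2 <= n}) (s_neq0 : s != [::]).

Local Notation F := (lastF s).
Local Notation q := (size s).
Local Notation tildeF := (tildeF s).
Implicit Types (A B X : {set 'I_n}) (C : {set option 'I_n}).

Lemma size_s_gt0 : 0 < q.
Proof. by rewrite lt0n size_eq0. Qed.

Lemma nth_lastF : nth set0 s q.-1 = F.
Proof. exact: nth_last. Qed.

Lemma lastF_in : F \in s.
Proof. by rewrite -nth_lastF mem_nth // prednK // size_s_gt0. Qed.

Lemma mem_take_lastF A : (A \in take q.-1 s) = (A \in s) && (A != F).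
Proof.
have sE : s = rcons (take q.-1 s) F.
  by rewrite -nth_lastF -take_nth ?prednK ?take_size // size_s_gt0.
have := s_uniq; rewrite {1}sE rcons_uniq => /andP[Fnotin _].
rewrite [in A \in s]sE mem_rcons inE; case: eqVneq => [->|_]; last by rewrite andbT.
exact: negbTE.
Qed.

Lemma cardsUI_setT A B : A :|: B = setT -> #|A| + #|B| = n + #|A :&: B|.
Proof. by move=> ABT; rewrite -cardsUI ABT cardsT card_ord. Qed.

Definition is_typeB A : bool := A :|: F == setT.

Lemma typeB_card A : A \in s -> is_typeB A -> #|A :&: F| + 2 <= #|F|.
Proof. by move=> As /eqP/cardsUI_setT; have := s_small As; lia. Qed.

Lemma typeB_neq_lastF A : A \in s -> is_typeB A -> A != F.
Proof. by move=> As /(typeB_card As); apply: contraTneq => ->; rewrite setIid; lia. Qed.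

Lemma typeB_subset A B : is_typeB B -> (A :&: F \subset B) = (A \subset B).
Proof.
move=> /eqP BFT; apply/idP/idP => [AFB|]; last exact: subset_trans (subsetIl _ _).
apply/subsetP => x xA; case xF: (x \in F); first by apply: (subsetP AFB); rewrite inE xA.
have : x \in B :|: F by rewrite BFT inE.
by rewrite inE xF orbF.
Qed.

Lemma typeB_supset A B : is_typeB A -> A \subset B -> is_typeB B.
Proof.
by move=> /eqP AFT AB; rewrite /is_typeB eqEsubset subsetT -{1}AFT setSU.
Qed.

Lemma typeB_setD1 A z : is_typeB A -> z \in F -> is_typeB (A :\ z).
Proof.
move=> /eqP AFT zF; rewrite /is_typeB -AFT; apply/eqP/setP => x; rewrite !inE.
by case: eqVneq => //= ->; rewrite zF !orbT.
Qed.

Definition lastF_walls : {set 'I_n} := [set x in F | F :\ x \in gen (take q.-1 s)].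

Lemma lastF_walls_sub x : x \in lastF_walls -> x \in F.
Proof. by rewrite inE => /andP[]. Qed.

Lemma lastF_wall_supset A : A \in s -> A != F ->
  exists2 x, x \in lastF_walls & A :&: F \subset F :\ x.
Proof.
move=> As AF; have At : A \in take q.-1 s by rewrite mem_take_lastF As AF.
have qP : 0 < q.-1 < q.
  rewrite ltn_predL size_s_gt0 andbT.
  by move: At; case: (q.-1) => //; rewrite take0.
have AFgen : A :&: F \in gen (take q.-1 s) by apply/genP; exists A; rewrite ?subsetIl.
have AFsub : A :&: F \subset nth set0 s q.-1 by rewrite nth_lastF subsetIr.
have [x xF /andP[AFx Fxgen]] := shelling_walls_cover s_shelling qP AFgen AFsub.
rewrite nth_lastF in xF AFx Fxgen.
by exists x => //; rewrite inE xF Fxgen.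
Qed.

Lemma typeA_familyP X : reflect
  (exists2 A, A \in s & [/\ ~~ (F \subset A), A :|: F != setT & X = A :&: F])
  (X \in typeA_family s).
Proof.
apply: (iffP imsetP) => -[A].
  by rewrite inE => /andP[As /andP[FA AFT]] ->; exists A.
by move=> As [FA AFT ->]; exists A; rewrite // inE As FA AFT.
Qed.

Lemma lastF_wall_typeA x : x \in lastF_walls -> F :\ x \in typeA_family s.
Proof.
rewrite inE => /andP[xF /genP[A At FxA]].
move: At; rewrite mem_take_lastF => /andP[As AF].
have F_sub_xA : {subset F <= x |: A}.
  move=> y yF; rewrite !inE; case: eqVneq => //= yx.
  by apply: (subsetP FxA); rewrite !inE yx.
have xA : x \notin A.
  apply: contra AF => xA; apply/eqP/esym/(s_antichain lastF_in As).
  by apply/subsetP => y /F_sub_xA /setU1P[->|].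
apply/typeA_familyP; exists A => //; split.
- by apply: contra xA => /subsetP; apply.
- apply: contraTneq (s_small As) => AFT; rewrite -ltnNge.
  have : #|A :|: F| <= #|x |: A|.
    apply/subset_leq_card/subsetP => y; rewrite inE => /orP[yA|/F_sub_xA //].
    by rewrite inE yA orbT.
  by rewrite AFT cardsT card_ord cardsU1 xA; lia.
- apply/setP => y; rewrite !inE; case: eqVneq => [->|yx]; first by rewrite (negbTE xA).
  by case yF: (y \in F); rewrite ?andbF //= (subsetP FxA) // !inE yx.
Qed.

Lemma facets_typeA_family :
  facets (typeA_family s) = [set F :\ x | x in lastF_walls].
Proof.
apply: facets_cofinal.
- by apply/subsetP => _ /imsetP[x xW ->]; exact: lastF_wall_typeA.
- move=> _ /typeA_familyP[A As [FA _ ->]].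
  have [|x xW AFx] := lastF_wall_supset As; first by apply: contraNneq FA => ->.
  by exists (F :\ x); first exact: imset_f.
- move=> _ _ /imsetP[x xW ->] /imsetP[y yW ->] Fxy.
  by rewrite (setD1_subset_inj (lastF_walls_sub yW) Fxy).
Qed.

Lemma typeAE : typeA s = [set Some @: (F :\ x) | x in lastF_walls].
Proof. by rewrite /typeA facets_typeA_family -imset_comp. Qed.

Lemma None_in_tildeF A : None \in tildeF A.
Proof. exact: setU11. Qed.

Lemma Some_in_tildeF A z : (Some z \in tildeF A) = (z \in A :&: F).
Proof. by rewrite /tildeF in_setU1 /= Some_in_imset_Some. Qed.

Lemma tildeF_subset A B : (tildeF A \subset tildeF B) = (A :&: F \subset B :&: F).
Proof.
apply/subsetP/subsetP => [AB z|AB [z|]]; last by move=> _; apply: None_in_tildeF.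
  by have := AB (Some z); rewrite !Some_in_tildeF.
by rewrite !Some_in_tildeF; apply: AB.
Qed.

Lemma tildeFS A B : A \subset B -> tildeF A \subset tildeF B.
Proof. by rewrite tildeF_subset; apply: setSI. Qed.

Lemma tildeF_subset_typeB A B : is_typeB B -> (tildeF A \subset tildeF B) = (A \subset B).
Proof. by move=> typB; rewrite tildeF_subset subsetI subsetIr andbT typeB_subset. Qed.

Lemma tildeFI A B : tildeF (A :&: B) = tildeF A :&: tildeF B.
Proof.
apply/setP => -[z|]; rewrite in_setI ?None_in_tildeF // !Some_in_tildeF !inE.
by rewrite andbACA andbb.
Qed.

Lemma tildeFD1 A z : tildeF (A :\ z) = tildeF A :\ Some z.
Proof.
apply/setP => -[y|]; rewrite in_setD1 ?None_in_tildeF // !Some_in_tildeF !inE.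
by rewrite (inj_eq Some_inj) andbA.
Qed.

Definition shellingA : seq {set option 'I_n} :=
  [seq Some @: (F :\ x) | x <- enum lastF_walls].

Definition shellingF : seq {set option 'I_n} :=
  shellingA ++ map tildeF (filter is_typeB s).

Lemma None_notin_shellingA C : C \in shellingA -> None \notin C.
Proof. by case/mapP => x _ ->; apply: None_notin_imset_Some. Qed.

Lemma tildeF_gen X r : is_typeB X ->
  (tildeF X \in gen (shellingA ++ map tildeF (filter is_typeB r))) = (X \in gen r).
Proof.
move=> typX; apply/genP/genP => [[C]|[B Br XB]]; last first.
  have typB := typeB_supset typX XB.
  by exists (tildeF B); rewrite ?tildeF_subset_typeB // mem_cat map_f ?orbT // mem_filter typB.
rewrite mem_cat => /orP[/None_notin_shellingA/negP CNone /subsetP XC|].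
  by case: CNone; apply: XC; apply: None_in_tildeF.
case/mapP => B; rewrite mem_filter => /andP[typB Br] ->.
by rewrite tildeF_subset_typeB // => XB; exists B.
Qed.

Lemma tildeF_setD1_None_gen A r : A \in s -> is_typeB A ->
  tildeF A :\ None \in gen (shellingA ++ r).
Proof.
move=> As typA; have [x xW AFx] := lastF_wall_supset As (typeB_neq_lastF As typA).
apply/genP; exists (Some @: (F :\ x)); first by rewrite mem_cat map_f ?mem_enum.
by rewrite /tildeF setU1K ?None_notin_imset_Some ?imsetS.
Qed.

Lemma shellingA_walls_cover C r : C \in shellingA -> {subset r <= shellingA} -> C \notin r ->
  walls_cover (gen r) C.
Proof.
case/mapP => x _ -> rA Cr B /genP[D Dr BD] BC.
have [y] := mapP (rA D Dr); rewrite mem_enum => yW DE.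
have yx : y != x by apply: contraNneq Cr => yx; rewrite -yx -DE.
exists (Some y); first by rewrite Some_in_imset_Some !inE yx (lastF_walls_sub yW).
rewrite subsetD1 BC /=; apply/andP; split.
  by apply: contra (subsetP BD (Some y)) _; rewrite DE Some_in_imset_Some !inE eqxx.
apply/genP; exists D; rewrite // DE.
apply/subsetP => b /setD1P[Swy /imsetP[w /setD1P[_ wF] bE]]; subst b.
rewrite Some_in_imset_Some !inE wF andbT.
by apply: contra_neq Swy => ->.
Qed.

Lemma shellingF_typeB_walls_cover i : i < q -> is_typeB (nth set0 s i) ->
  walls_cover (gen (shellingA ++ map tildeF (filter is_typeB (take i s))))
              (tildeF (nth set0 s i)).
Proof.
move=> iq; set A := nth set0 s i => typA B BG BA.
have As : A \in s by apply: mem_nth.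
case NB: (None \in B); last first.
  exists None; first exact: None_in_tildeF.
  by rewrite subsetD1 BA NB tildeF_setD1_None_gen.
case/genP: BG => C; rewrite mem_cat => /orP[/None_notin_shellingA CN /subsetP/(_ None NB)|].
  by rewrite (negbTE CN).
case/mapP => Fj; rewrite mem_filter => /andP[typFj Fjt] -> BFj.
have iP : 0 < i < q.
  by rewrite iq andbT lt0n; apply: contraTneq Fjt => ->; rewrite take0.
have AFjgen : A :&: Fj \in gen (take i s) by apply/genP; exists Fj; rewrite ?subsetIr.
have [z zA /andP[AFjz wallz]] := shelling_walls_cover s_shelling iP AFjgen (subsetIl A Fj).
have zFj : z \notin Fj by move: AFjz; rewrite subsetD1 inE zA => /andP[].
have zF : z \in F by move/eqP/setP/(_ z): typFj; rewrite !inE (negbTE zFj).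
exists (Some z); first by rewrite Some_in_tildeF inE zA.
rewrite -tildeFD1 tildeF_gen ?typeB_setD1 // wallz andbT.
by apply: subset_trans (tildeFS AFjz); rewrite tildeFI subsetI BA.
Qed.

Lemma nth_shellingF_typeB A : A \in s -> is_typeB A ->
  nth set0 shellingF (size shellingA + index A (filter is_typeB s)) = tildeF A.
Proof.
move=> As typA; rewrite nth_cat ltnNge leq_addr /= addKn (nth_map set0).
  by rewrite nth_index // mem_filter typA.
by rewrite index_mem mem_filter typA.
Qed.

Lemma take_shellingF_typeB A : A \in s -> is_typeB A ->
  take (size shellingA + index A (filter is_typeB s)) shellingF
  = shellingA ++ map tildeF (filter is_typeB (take (index A s) s)).
Proof.
move=> As typA; rewrite take_cat ltnNge leq_addr /= addKn -map_take.
have := @take_filter_index _ set0 is_typeB s (index A s) s_uniq.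
by rewrite index_mem nth_index // => /(_ As typA) ->.
Qed.

Lemma shellingA_uniq : uniq shellingA.
Proof.
rewrite map_inj_in_uniq ?enum_uniq // => x y; rewrite !mem_enum => xW yW.
move=> /(imset_inj Some_inj) Fxy; apply: setD1_subset_inj (lastF_walls_sub yW) _.
by rewrite Fxy.
Qed.

Lemma shellingF_uniq : uniq shellingF.
Proof.
rewrite cat_uniq shellingA_uniq map_inj_in_uniq ?filter_uniq //=.
  rewrite andbT; apply/hasPn => _ /mapP[A _ ->]; apply/negP => /None_notin_shellingA.
  by rewrite None_in_tildeF.
move=> A B; rewrite !mem_filter => /andP[_ As] /andP[typB Bs] AB.
by apply: s_antichain As Bs _; rewrite -tildeF_subset_typeB // AB.
Qed.

Lemma shellingFP C : reflect
  ((exists2 x, x \in lastF_walls & C = Some @: (F :\ x)) \/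
   (exists2 A, (A \in s) && is_typeB A & C = tildeF A))
  (C \in shellingF).
Proof.
rewrite mem_cat; apply: (iffP orP) => [[] /mapP[u]|[] [u]]; rewrite ?mem_enum ?mem_filter.
- by move=> uW ->; left; exists u.
- by move=> uP ->; right; exists u; rewrite // andbC.
- by move=> uW ->; left; apply: map_f; rewrite mem_enum.
- by move=> uP ->; right; apply: map_f; rewrite mem_filter andbC.
Qed.

Lemma mem_shellingF C : (C \in shellingF) = (C \in typeA s :|: typeB s).
Proof.
rewrite in_setU typeAE; apply/shellingFP/orP => [[] [u uP ->]|[] /imsetP[u uP ->]].
- by left; apply: imset_f.
- by right; apply: imset_f; rewrite inE.
- by left; exists u.
- by right; exists u; rewrite inE in uP.
Qed.

Lemma shellingF_antichain :
  {in shellingF &, forall C D : {set option 'I_n}, C \subset D -> C = D}.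
Proof.
move=> C D /shellingFP[] [u uP ->] /shellingFP[] [w wP ->].
- rewrite subset_imset_inj; last exact: Some_inj.
  by move=> /setD1_subset_inj -> //; apply: lastF_walls_sub.
- move=> /subsetP Fu_w; case/andP: wP => ws typw.
  have : F :\ u \subset w :&: F.
    by apply/subsetP => z zFu; rewrite -Some_in_tildeF Fu_w ?Some_in_imset_Some.
  move/subset_leq_card; have := typeB_card ws typw.
  by have := cardsD1 u F; rewrite (lastF_walls_sub uP); lia.
- by move/subsetP/(_ None (None_in_tildeF _)); rewrite (negbTE (None_notin_imset_Some _)).
- case/andP: uP => us typu; case/andP: wP => ws typw.
  by rewrite tildeF_subset_typeB // => /(s_antichain us ws) ->.
Qed.

Lemma facets_DeltaF : facets (DeltaF s) = typeA s :|: typeB s.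
Proof.
apply: facets_cofinal.
- by apply/subsetP => C CM; apply/gen_setP; exists C.
- by move=> C /gen_setP.
- by move=> C D; rewrite -!mem_shellingF; apply: shellingF_antichain.
Qed.

Lemma shellingF_shelling_cond : shelling_cond shellingF.
Proof.
move=> k /andP[_ kt]; apply: walls_cover_pure.
have [kA|Ak] := ltnP k (size shellingA).
  rewrite nth_cat take_cat kA; apply: shellingA_walls_cover.
  - exact: mem_nth.
  - by move=> C /mem_take.
  - exact: nth_notin_take shellingA_uniq kA.
set A := nth set0 (filter is_typeB s) (k - size shellingA).
have jB : k - size shellingA < size (filter is_typeB s).
  by move: kt; rewrite size_cat (size_map tildeF); lia.
have : A \in filter is_typeB s by apply: mem_nth.
rewrite mem_filter => /andP[typA As].
have -> : k = size shellingA + index A (filter is_typeB s).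
  by rewrite index_uniq ?filter_uniq ?subnKC.
rewrite nth_shellingF_typeB // take_shellingF_typeB //.
have iq : index A s < q by rewrite index_mem.
by have := shellingF_typeB_walls_cover iq; rewrite nth_index //; apply.
Qed.

Lemma is_shelling_shellingF : is_shelling (DeltaF s) shellingF.
Proof.
split; [exact: shellingF_uniq | | exact: shellingF_shelling_cond].
by move=> C; rewrite facets_DeltaF mem_shellingF.
Qed.

Lemma Gset_shellingF_typeB i : i < q -> is_typeB (nth set0 s i) ->
  Gset shellingF (index (tildeF (nth set0 s i)) shellingF) = Some @: (Gset s i :&: F).
Proof.
set A := nth set0 s i => iq typA.
have As : A \in s by apply: mem_nth.
have iA : index A s = i by apply: index_uniq.
have kt : size shellingA + index A (filter is_typeB s) < size shellingF.
  by rewrite size_cat (size_map tildeF) ltn_add2l index_mem mem_filter typA.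
rewrite -(nth_shellingF_typeB As typA) index_uniq ?shellingF_uniq //.
rewrite !GsetE nth_shellingF_typeB // take_shellingF_typeB // iA -/A.
apply/setP => -[z|]; last first.
  rewrite in_set None_in_tildeF tildeF_setD1_None_gen //.
  by rewrite (negbTE (None_notin_imset_Some _)).
rewrite Some_in_imset_Some in_setI [in RHS]in_set in_set Some_in_tildeF in_setI.
case zF: (z \in F); rewrite ?andbF ?andbT //.
by rewrite -tildeFD1 tildeF_gen ?typeB_setD1.
Qed.

End LastFacet.

Theorem lemma4p8 (n : nat) (D : {set {set 'I_n}}) (s : seq {set 'I_n}) :
  is_complex D ->
  is_shelling D s ->
  s != [::] ->
  (forall A, A \in D -> (fdim A <= n%:Z - 3)%R) ->
  shellable (DeltaF s) /\
  exists t : seq {set option 'I_n},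
    is_shelling (DeltaF s) t /\
    forall i, i < size s -> nth set0 s i :|: lastF s = setT ->
      Gset t (index (tildeF s (nth set0 s i)) t)
      = Some @: (Gset s i :&: lastF s).
Proof.
move=> _ [s_uniq s_facets s_shelling] s_neq0 dimD.
have s_antichain : {in s &, forall A B : {set 'I_n}, A \subset B -> A = B}.
  move=> A B; rewrite !s_facets => /facetsP[_ maxA] /facetsP[BD _] AB.
  exact/esym/maxA.
have s_small : {in s, forall A : {set 'I_n}, #|A| + 2 <= n}.
  by move=> A; rewrite s_facets => /facetsP[/dimD]; rewrite /fdim; lia.
have shF := is_shelling_shellingF s_uniq s_shelling s_antichain s_small s_neq0.
split; first by exists (shellingF s).
exists (shellingF s); split=> // i iq /eqP typi.
exact: Gset_shellingF_typeB.
Qed.
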